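(* Let $\mathcal A\in\mathbb C^{n\times n}$ be nonsingular and positive definite, suppose $\mathcal A=\mathcal P_1+\mathcal P_2$ with $\mathcal P_1,\mathcal P_2$ positive semidefinite, and let $\Sigma$ be Hermitian positive definite. Let $\Gamma_{\mathrm{PPS}}=(\Sigma+\mathcal P_1)^{-1}(\Sigma-\mathcal P_2)(\Sigma+\mathcal P_2)^{-1}(\Sigma-\mathcal P_1)$. If one of the following conditions holds, then $\rho(\Gamma_{\mathrm{PPS}})<1$: (1) $\mathrm{ev}(\Gamma_{\mathrm{PPS}})\cap\mathrm{null}(\mathcal P_1+\mathcal P_1^* )\subseteq\mathrm{null}(\mathcal P_1)$; (2) $\mathrm{ev}(\Gamma_{\mathrm{PPS}})\subseteq\mathrm{null}(\mathcal P_1)\cup\mathrm{null}(\mathcal P_2+\mathcal P_2^* )$.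
   Context: A matrix $\mathcal P\in\mathbb C^{n\times n}$ is called positive semidefinite if $\mathcal P+\mathcal P^*$ is Hermitian positive semidefinite, and positive definite if $\mathcal P+\mathcal P^*$ is Hermitian positive definite; $\mathcal P$ need not be Hermitian. $\rho(\cdot)$ is the spectral radius, $\mathrm{null}(\cdot)$ the null space, and $\mathrm{ev}(M)$ the set of all nonzero eigenvectors of a square matrix $M$. *)

From HB Require Import structures.
From mathcomp Require Import all_boot all_order all_algebra.
From mathcomp Require Import reals complex.
Set Implicit Arguments. Unset Strict Implicit. Unset Printing Implicit Defensive.
Import Order.TTheory GRing.Theory Num.Theory.
Local Open Scope ring_scope.
Local Open Scope complex_scope.

Section Defs.
Variable C : numClosedFieldType.

Definition ctmx (m n : nat) (M : 'M[C]_(m, n)) : 'M[C]_(n, m) :=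
  (map_mx Num.conj M)^T.

Definition hermitian (n : nat) (H : 'M[C]_n) : Prop := ctmx H = H.

Definition herm_psd (n : nat) (H : 'M[C]_n) : Prop :=
  hermitian H /\ forall x : 'cV[C]_n, 0 <= (ctmx x *m H *m x) 0 0.
Definition herm_pd (n : nat) (H : 'M[C]_n) : Prop :=
  hermitian H /\ forall x : 'cV[C]_n, x != 0 -> 0 < (ctmx x *m H *m x) 0 0.

(* the paper's (possibly non-Hermitian) positive (semi)definiteness *)
Definition pos_semidef (n : nat) (P : 'M[C]_n) : Prop := herm_psd (P + ctmx P).
Definition pos_def (n : nat) (P : 'M[C]_n) : Prop := herm_pd (P + ctmx P).

Definition nullsp (n : nat) (M : 'M[C]_n) (x : 'cV[C]_n) : Prop := M *m x = 0.

Definition ev (n : nat) (M : 'M[C]_n) (x : 'cV[C]_n) : Prop :=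
  x != 0 /\ exists lambda : C, M *m x = lambda *: x.
End Defs.

Definition spectral_radius (C : numClosedFieldType) (n : nat) (M : 'M[C]_n) : C :=
  \big[Num.max/0]_(z <- sval (closed_field_poly_normal (char_poly M))) `|z|.

Definition Gamma_PPS (C : numClosedFieldType) (n : nat) (S P1 P2 : 'M[C]_n) : 'M[C]_n :=
  invmx (S + P1) *m (S - P2) *m invmx (S + P2) *m (S - P1).

From HB Require Import structures.
From mathcomp Require Import all_boot all_order all_algebra.
From mathcomp Require Import reals complex.
From mathcomp Require Import ring.
Set Implicit Arguments. Unset Strict Implicit. Unset Printing Implicit Defensive.
Import Order.TTheory GRing.Theory Num.Theory.
Local Open Scope ring_scope.

(* Let K = S^-1.  For Hermitian S and any P, the Cayley-type identity
   (S - P)^* K (S - P) = (S + P)^* K (S + P) - 2 (P + P^* )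
   says that S - P shrinks the squared K-norm of S + P by twice z^* (P + P^* ) z.
   Following an eigenvector x of Gamma (eigenvalue lam) through the two half-steps,
   with u = (S + P2)^-1 (S - P1) x, yields the energy identity
   (1 - |lam|^2) |(S + P1) x|_K^2 = 2 (x^* (P1 + P1^* ) x + u^* (P2 + P2^* ) u),
   so |lam| < 1 unless both dissipations vanish.  Then (P1 + P1^* ) x = 0, so P1 x = 0
   by either condition (the alternative (P2 + P2^* ) x = 0 of (2) contradicts the
   positive definiteness of A = P1 + P2), hence 2 u = (1 + lam) x, and the positive
   definiteness of A (or the invertibility of S when lam = -1) forces x = 0. *)

Section MatrixFacts.
Variable F : fieldType.

Lemma char_poly_trmx n (M : 'M[F]_n) : char_poly M^T = char_poly M.
Proof.
rewrite /char_poly -det_tr; congr (\det _).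
by apply/matrixP => i j; rewrite !mxE eq_sym.
Qed.

Lemma root_char_poly_eigenvector n (M : 'M[F]_n) a : root (char_poly M) a ->
  exists2 x : 'cV[F]_n, x != 0 & M *m x = a *: x.
Proof.
rewrite -char_poly_trmx -eigenvalue_root_char => /eigenvalueP [v vM vn0].
exists v^T; first by rewrite -trmx0 (inj_eq trmx_inj).
by rewrite -[M]trmxK -trmx_mul vM linearZ.
Qed.

Lemma ker0_unitmx n (M : 'M[F]_n) :
  (forall z : 'cV[F]_n, M *m z = 0 -> z = 0) -> M \in unitmx.
Proof.
move=> M_inj; rewrite -unitmx_tr unitmxE unitfE; apply/negP => /det0P [v vn0 vM].
have := M_inj v^T; rewrite -[M]trmxK -trmx_mul vM trmx0 => /(_ erefl) /eqP.
by rewrite -trmx0 (inj_eq trmx_inj) (negbTE vn0).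
Qed.

End MatrixFacts.

Section ConjugateTranspose.
Variable C : numClosedFieldType.

Lemma ctmxD m n (A B : 'M[C]_(m, n)) : ctmx (A + B) = ctmx A + ctmx B.
Proof. by rewrite /ctmx map_mxD linearD. Qed.

Lemma ctmxB m n (A B : 'M[C]_(m, n)) : ctmx (A - B) = ctmx A - ctmx B.
Proof. by rewrite /ctmx map_mxB linearB. Qed.

Lemma ctmxZ m n a (A : 'M[C]_(m, n)) : ctmx (a *: A) = a^* *: ctmx A.
Proof. by rewrite /ctmx map_mxZ linearZ. Qed.

Lemma ctmxM m n p (A : 'M[C]_(m, n)) (B : 'M[C]_(n, p)) :
  ctmx (A *m B) = ctmx B *m ctmx A.
Proof. by rewrite /ctmx map_mxM trmx_mul. Qed.

Lemma ctmxK m n (A : 'M[C]_(m, n)) : ctmx (ctmx A) = A.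
Proof. by apply/matrixP => i j; rewrite /ctmx !mxE conjCK. Qed.

Lemma ctmx_inv n (A : 'M[C]_n) : ctmx (invmx A) = invmx (ctmx A).
Proof. by rewrite /ctmx -trmx_inv; congr _^T; exact: map_invmx. Qed.

Lemma ctmx_add_ctmx n (A : 'M[C]_n) : ctmx (A + ctmx A) = A + ctmx A.
Proof. by rewrite ctmxD ctmxK addrC. Qed.

End ConjugateTranspose.

Section HermitianForm.
Variable C : numClosedFieldType.

Definition hform n (M : 'M[C]_n) (z : 'cV[C]_n) : C := (ctmx z *m M *m z) 0 0.

Lemma hformD n (M N : 'M[C]_n) z : hform (M + N) z = hform M z + hform N z.
Proof. by rewrite /hform mulmxDr mulmxDl mxE. Qed.

Lemma hformZ n a (M : 'M[C]_n) z : hform (a *: M) z = a * hform M z.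
Proof. by rewrite /hform -scalemxAr -scalemxAl mxE. Qed.

Lemma hformB n (M N : 'M[C]_n) z : hform (M - N) z = hform M z - hform N z.
Proof. by rewrite hformD -scaleN1r hformZ mulN1r. Qed.

Lemma hform_mulmx n (M N : 'M[C]_n) z : hform M (N *m z) = hform (ctmx N *m M *m N) z.
Proof. by rewrite /hform ctmxM !mulmxA. Qed.

Lemma hform_scalev n a (M : 'M[C]_n) z : hform M (a *: z) = `|a| ^+ 2 * hform M z.
Proof.
by rewrite /hform ctmxZ -!scalemxAl -scalemxAr !mxE normCK mulrA [a^* * a]mulrC.
Qed.

Lemma conj_hform n (M : 'M[C]_n) z : (hform M z)^* = hform (ctmx M) z.
Proof.
have ctmx11 (a : 'M[C]_1) : ctmx a 0 0 = (a 0 0)^* by rewrite /ctmx !mxE.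
by rewrite /hform -ctmx11 !ctmxM ctmxK mulmxA.
Qed.

Lemma hform_ker n (M : 'M[C]_n) z : M *m z = 0 -> hform M z = 0.
Proof. by move=> Mz0; rewrite /hform -mulmxA Mz0 mulmx0 mxE. Qed.

Lemma hform1_ge0 n (z : 'cV[C]_n) : 0 <= hform 1%:M z.
Proof.
rewrite /hform mulmx1 mxE; apply: sumr_ge0 => i _.
by rewrite /ctmx !mxE mulrC mul_conjC_ge0.
Qed.

Lemma hform1_eq0 n (z : 'cV[C]_n) : (hform 1%:M z == 0) = (z == 0).
Proof.
rewrite /hform mulmx1 mxE psumr_eq0 => [|i _]; last first.
  by rewrite /ctmx !mxE mulrC mul_conjC_ge0.
apply/allP/eqP => [z0 | -> i _]; last by rewrite /ctmx !mxE mulr0 eqxx.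
apply/matrixP => i j; rewrite (ord1 j) !mxE.
have /implyP := z0 i (mem_index_enum i).
by rewrite /ctmx !mxE mulrC mul_conjC_eq0 => /(_ isT) /eqP.
Qed.

Lemma herm_psd_ker n (H : 'M[C]_n) x : herm_psd H -> hform H x = 0 -> H *m x = 0.
Proof.
move=> [hH H_ge0] Hx0; set v := H *m x.
set a := hform 1%:M v; set c := hform H v.
have a_ge0 : 0 <= a := hform1_ge0 v.
have c_ge0 : 0 <= c := H_ge0 v.
have xH : ctmx x *m H = ctmx v by rewrite /v ctmxM hH.
(* the test vector (c + 1) x - a v makes the form equal to -a^2 (c + 2) *)
have := H_ge0 ((c + 1) *: x - a *: v).
rewrite ctmxB !ctmxZ !geC0_conj ?addr_ge0 //.
rewrite !mulmxBl !mulmxBr -!scalemxAl -!scalemxAr xH -[ctmx v *m H *m x]mulmxA -/v.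
have vx0 : (ctmx v *m x) 0 0 = 0 by rewrite -xH.
have vva : (ctmx v *m v) 0 0 = a by rewrite /a /hform mulmx1.
have vHvc : (ctmx v *m H *m v) 0 0 = c by [].
move: vx0 vva vHvc; move: (ctmx v *m x) (ctmx v *m v) (ctmx v *m H *m v).
move=> X Y Z vx0 vva vHvc; rewrite !mxE vx0 vva vHvc.
have -> : (c + 1) * ((c + 1) * 0) - (c + 1) * (a * a) - (a * ((c + 1) * a) - a * (a * c))
    = - (a * a * (c + 2%:R)) by ring.
rewrite oppr_ge0 pmulr_lle0 ?ltr_wpDl // => aa_le0.
by apply/eqP; rewrite -hform1_eq0 -/a -[a == 0]orbb -mulf_eq0 eq_le aa_le0 mulr_ge0.
Qed.

Lemma hform_invmx_cayley n (S P : 'M[C]_n) z : ctmx S = S -> S \in unitmx ->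
  hform (invmx S) ((S - P) *m z) =
  hform (invmx S) ((S + P) *m z) - 2%:R * hform (P + ctmx P) z.
Proof.
move=> hS uS; rewrite !hform_mulmx ctmxB ctmxD hS -hformZ -hformB; congr hform.
rewrite !mulmxBl !mulmxDl !mulmxBr !mulmxDr mulmxV // !mul1mx.
rewrite -!(mulmxA (ctmx P)) mulVmx // mulmx1.
move: (ctmx P *m (invmx S *m P)) (ctmx P) => T Q.
by apply/matrixP => i j; rewrite !mxE; ring.
Qed.

End HermitianForm.

Section PositiveDefinite.
Variable C : numClosedFieldType.

Lemma pos_def_hform_eq0 n (A : 'M[C]_n) z :
  pos_def A -> hform (A + ctmx A) z = 0 -> z = 0.
Proof.
move=> [_ A_pos] Az0; apply/eqP/negPn/negP => /A_pos.
by rewrite -/(hform _ z) Az0 ltxx.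
Qed.

Lemma pos_defD_ker n (A B : 'M[C]_n) (z : 'cV[C]_n) : pos_def (A + B) ->
  (A + ctmx A) *m z = 0 -> (B + ctmx B) *m z = 0 -> z = 0.
Proof.
move=> AB_pd Az0 Bz0; apply: pos_def_hform_eq0 AB_pd _.
by rewrite ctmxD addrACA hformD !hform_ker // addr0.
Qed.

Lemma pos_def_unitmx n (A : 'M[C]_n) : pos_def A -> A \in unitmx.
Proof.
move=> A_pd; apply: ker0_unitmx => z Az0; apply: pos_def_hform_eq0 A_pd _.
by rewrite hformD -conj_hform hform_ker // conjC0 addr0.
Qed.

Lemma pos_defD n (A B : 'M[C]_n) : pos_def A -> pos_semidef B -> pos_def (A + B).
Proof.
move=> [_ A_pos] [_ B_ge0]; split=> [|z zn0]; first exact: ctmx_add_ctmx.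
rewrite ctmxD addrACA -/(hform _ z) hformD.
exact: ltr_wpDr (B_ge0 z) (A_pos z zn0).
Qed.

Lemma herm_pd_pos_def n (S : 'M[C]_n) : herm_pd S -> pos_def S.
Proof.
move=> [hS S_pos]; split=> [|z zn0]; first exact: ctmx_add_ctmx.
by rewrite hS -/(hform _ z) hformD addr_gt0 ?S_pos.
Qed.

Lemma herm_pd_invmx n (S : 'M[C]_n) : herm_pd S -> herm_pd (invmx S).
Proof.
move=> S_pd; have uS := pos_def_unitmx (herm_pd_pos_def S_pd).
have [hS S_pos] := S_pd.
have hK : ctmx (invmx S) = invmx S by rewrite ctmx_inv hS.
split=> // z zn0; rewrite -/(hform _ z).
have -> : hform (invmx S) z = hform S (invmx S *m z).
  by rewrite hform_mulmx hK mulVmx ?mul1mx.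
apply: S_pos; apply: contraNneq zn0 => /(congr1 (mulmx S)).
by rewrite mulKVmx // mulmx0 => ->.
Qed.

End PositiveDefinite.

Lemma spectral_radius_lt1 (C : numClosedFieldType) n (M : 'M[C]_n) :
  (forall (x : 'cV[C]_n) a, x != 0 -> M *m x = a *: x -> `|a| < 1) ->
  spectral_radius M < 1.
Proof.
move=> eigen_lt1; rewrite /spectral_radius; case: closed_field_poly_normal => r /= Mr.
rewrite big_seq; apply: bigmax_lt => [|z zr]; first exact: ltr01.
have /root_char_poly_eigenvector [x xn0 Mx] : root (char_poly M) z.
  by rewrite Mr (monicP (char_poly_monic _)) scale1r root_prod_XsubC.
exact: eigen_lt1 xn0 Mx.
Qed.

Section PPSIteration.
Variables (C : numClosedFieldType) (n : nat) (S P1 P2 : 'M[C]_n).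
Hypothesis S_pd : herm_pd S.

Let hS : ctmx S = S := S_pd.1.
Let uS : S \in unitmx := pos_def_unitmx (herm_pd_pos_def S_pd).

Lemma unitmx_add_pos_semidef (P : 'M[C]_n) : pos_semidef P -> S + P \in unitmx.
Proof. by move=> P_psd; apply/pos_def_unitmx/pos_defD/P_psd/herm_pd_pos_def. Qed.

Lemma PPS_energy (x u : 'cV[C]_n) lam :
  (S + P2) *m u = (S - P1) *m x -> (S - P2) *m u = lam *: ((S + P1) *m x) ->
  (1 - `|lam| ^+ 2) * hform (invmx S) ((S + P1) *m x) =
  2%:R * (hform (P1 + ctmx P1) x + hform (P2 + ctmx P2) u).
Proof.
move=> half1 half2.
have := hform_invmx_cayley P2 u hS uS.
rewrite half2 hform_scalev half1 hform_invmx_cayley // mulrBl mul1r => ->.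
by ring.
Qed.

Hypotheses (P1_psd : pos_semidef P1) (P2_psd : pos_semidef P2).

Lemma Gamma_PPS_eigen_halves (x : 'cV[C]_n) lam :
  Gamma_PPS S P1 P2 *m x = lam *: x ->
  exists2 u : 'cV[C]_n,
    (S + P2) *m u = (S - P1) *m x & (S - P2) *m u = lam *: ((S + P1) *m x).
Proof.
move=> Gx; exists (invmx (S + P2) *m ((S - P1) *m x)).
  by rewrite mulKVmx ?unitmx_add_pos_semidef.
rewrite scalemxAr -Gx /Gamma_PPS !mulmxA mulmxV ?unitmx_add_pos_semidef //.
by rewrite mul1mx.
Qed.

Hypothesis P12_pd : pos_def (P1 + P2).

Lemma PPS_degenerate_eq0 (x u : 'cV[C]_n) lam :
  (S + P2) *m u = (S - P1) *m x -> (S - P2) *m u = lam *: ((S + P1) *m x) ->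
  P1 *m x = 0 -> (P1 + ctmx P1) *m x = 0 -> (P2 + ctmx P2) *m u = 0 -> x = 0.
Proof.
move=> half1 half2 P1x0 H1x0 H2u0.
rewrite !mulmxBl !mulmxDl P1x0 subr0 addr0 in half1 half2.
have S_inj : injective (mulmx S) := can_inj (mulKmx uS).
have u_x : 2%:R *: u = (1 + lam) *: x.
  apply: S_inj; rewrite -!scalemxAr scaler_nat mulr2n scalerDl scale1r.
  by rewrite -half2 -half1 addrACA subrr addr0.
have : (1 + lam) *: ((P2 + ctmx P2) *m x) = 0.
  by rewrite scalemxAr -u_x -scalemxAr H2u0 scaler0.
move/eqP; rewrite scalemx_eq0 => /orP [/eqP lam_m1 | /eqP H2x0]; last first.
  exact: pos_defD_ker P12_pd H1x0 H2x0.
move: u_x; rewrite lam_m1 scale0r => /eqP; rewrite scalemx_eq0 pnatr_eq0 /= => /eqP u0.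
by apply: S_inj; rewrite -half1 u0 !mulmx0 addr0.
Qed.

Lemma Gamma_PPS_eigenvalue_lt1 (x : 'cV[C]_n) lam :
  x != 0 -> Gamma_PPS S P1 P2 *m x = lam *: x ->
  ((P1 + ctmx P1) *m x = 0 -> P1 *m x = 0) -> `|lam| < 1.
Proof.
move=> xn0 Gx P1_ker; have [u half1 half2] := Gamma_PPS_eigen_halves Gx.
have energy := PPS_energy half1 half2.
set q1 := hform (P1 + ctmx P1) x in energy; set q2 := hform (P2 + ctmx P2) u in energy.
have q1_ge0 : 0 <= q1 := P1_psd.2 x.
have q2_ge0 : 0 <= q2 := P2_psd.2 u.
have [/eqP|q_neq0] := eqVneq (q1 + q2) 0.
  rewrite paddr_eq0 // => /andP [/eqP q1_0 /eqP q2_0].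
  have H1x0 := herm_psd_ker P1_psd q1_0.
  have H2u0 := herm_psd_ker P2_psd q2_0.
  by rewrite (PPS_degenerate_eq0 half1 half2 (P1_ker H1x0) H1x0 H2u0) eqxx in xn0.
have y_pos : 0 < hform (invmx S) ((S + P1) *m x).
  apply: (herm_pd_invmx S_pd).2; apply: contraNneq xn0 => y0.
  by rewrite -(mulKmx (unitmx_add_pos_semidef P1_psd) x) y0 mulmx0.
have : 0 < (1 - `|lam| ^+ 2) * hform (invmx S) ((S + P1) *m x).
  by rewrite energy mulr_gt0 ?ltr0n // lt_def q_neq0 addr_ge0.
by rewrite pmulr_lgt0 // subr_gt0 expr_lt1.
Qed.

End PPSIteration.

Theorem theorem3p7 (R : realType) (n : nat) (A P1 P2 S : 'M[R[i]]_n) :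
  A \in unitmx -> pos_def A ->
  A = P1 + P2 -> pos_semidef P1 -> pos_semidef P2 ->
  herm_pd S ->
  ((forall x, ev (Gamma_PPS S P1 P2) x ->
        nullsp (P1 + ctmx P1) x -> nullsp P1 x)
   \/
   (forall x, ev (Gamma_PPS S P1 P2) x ->
        nullsp P1 x \/ nullsp (P2 + ctmx P2) x)) ->
  spectral_radius (Gamma_PPS S P1 P2) < 1.
Proof.
move=> _ A_pd A_P P1_psd P2_psd S_pd cond; rewrite {}A_P in A_pd.
apply: spectral_radius_lt1 => x lam xn0 Gx.
apply: (Gamma_PPS_eigenvalue_lt1 S_pd P1_psd P2_psd A_pd xn0 Gx) => H1x0.
have x_ev : ev (Gamma_PPS S P1 P2) x by split; last exists lam.
case: cond => [cond1 | cond2]; first exact: cond1.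
case: (cond2 x x_ev) => // H2x0.
by rewrite (pos_defD_ker A_pd H1x0 H2x0) eqxx in xn0.
Qed.
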